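(* Let $\mathcal{S}_0$ and $\mathcal{S}_1$ be two MSyDSs with common node set $V$ such that every local function is a threshold function and every master function is \texttt{OR}. Let $\tau$ be the largest threshold value occurring among the local functions of $\mathcal{S}_0$ and $\mathcal{S}_1$. Then $\mathcal{S}_0$ and $\mathcal{S}_1$ are inequivalent if and only if there is an inequivalence witness for $\mathcal{S}_0$ and $\mathcal{S}_1$ in which at most $\tau$ nodes have state 1.
   Context: A multilayer synchronous dynamical system (MSyDS) $\mathcal{S}$ over $\mathbb{B}=\{0,1\}$ with $k\ge 1$ layers consists of: a finite node set $V$; undirected simple graphs $G_i=(V,E_i)$, $1\le i\le k$ (all layers share the node set $V$); for each layer $i$ and node $v$ a local function $f_{i,v}$ with output in $\mathbb{B}$ whose inputs are the states of the nodes in the closed neighborhood of $v$ in $G_i$ ($v$ and its neighbors in $G_i$); and for each node $v$ a master function $\psi_v:\mathbb{B}^k\to\mathbb{B}$. A configuration is a map $\mathcal{C}:V\to\mathbb{B}$; its successor is $\mathcal{C}'$ with $\mathcal{C}'(v)=\psi_v(f_{1,v}(\mathcal{C}),\dots,f_{k,v}(\mathcal{C}))$ for all $v$ (synchronous update), where $f_{i,v}(\mathcal{C})$ is $f_{i,v}$ evaluated on the states in $\mathcal{C}$ of the closed neighborhood of $v$ in $G_i$. For an integer $t\ge 0$, the $t$-threshold function equals 1 iff at least $t$ of its inputs equal 1; a threshold local function is specified by its threshold $t$. \texttt{OR} is 1 iff at least one input is 1. Two MSyDSs on the same node set are equivalent if every configuration has the same successor under both (i.e., their phase spaces are identical), and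 inequivalent otherwise. An inequivalence witness for two MSyDSs on node set $V$ is a configuration of $V$ whose successors under the two systems differ. *)

From mathcomp Require Import all_boot.
Unset Printing Implicit Defensive.

(* Layer i (i : 'I_k) has simple undirected graph
   [layer i] (symmetric, irreflexive relation on V) and the local function
   of node v in layer i is the [thr i v]-threshold function on the states of
   the closed neighbourhood of v in layer i. *)
Record ThrOrMSyDS (V : finType) := {
  nlayers : nat;
  nlayers_pos : 0 < nlayers;
  layer : 'I_nlayers -> rel V;
  layer_sym : forall i, symmetric (layer i);
  layer_irr : forall i, irreflexive (layer i);
  thr : 'I_nlayers -> V -> nat
}.
Arguments nlayers {V}.
Arguments layer {V} _ _.
Arguments thr {V} _ _ _.
Arguments nlayers_pos {V}.
Arguments layer_sym {V}.
Arguments layer_irr {V}.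

(* configurations: maps V -> B, with B = bool (true = 1) *)
Definition config (V : finType) := V -> bool.

Definition closed_nbhd {V : finType} (S : ThrOrMSyDS V) (i : 'I_(nlayers S)) (v : V) : {set V} :=
  [set u | (u == v) || layer S i v u].

Definition local_fun {V : finType} (S : ThrOrMSyDS V) (i : 'I_(nlayers S)) (v : V)
  (C : config V) : bool :=
  thr S i v <= #|[set u in closed_nbhd S i v | C u]|.

Definition successor {V : finType} (S : ThrOrMSyDS V) (C : config V) : config V :=
  fun v => [exists i : 'I_(nlayers S), local_fun S i v C].

Definition equivalent {V : finType} (S0 S1 : ThrOrMSyDS V) : Prop :=
  forall C : config V, forall v, successor S0 C v = successor S1 C v.

Definition inequivalence_witness {V : finType} (S0 S1 : ThrOrMSyDS V) (C : config V) : Prop :=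
  exists v, successor S0 C v <> successor S1 C v.

Definition num_ones {V : finType} (C : config V) : nat := #|[set v | C v]|.

Definition max_thr {V : finType} (S : ThrOrMSyDS V) : nat :=
  \max_(i : 'I_(nlayers S)) \max_(v : V) thr S i v.

Definition tau {V : finType} (S0 S1 : ThrOrMSyDS V) : nat := maxn (max_thr S0) (max_thr S1).

From mathcomp Require Import all_boot.
From Stdlib Require Import Classical.

(* Threshold functions and OR are monotone, so the successor of a node can only
   switch off when states are lowered from 1 to 0.  If S0 switches v on and S1
   does not, pick a layer i where the threshold t of v is reached in S0 and keep
   only t of the active neighbours of v in that layer: S0 still switches v on,
   and by monotonicity S1 still does not.  The new witness has t <= tau ones. *)

Section ThresholdOrSystems.

Context {V : finType}.
Implicit Types (S : ThrOrMSyDS V) (C D : config V).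

Definition config_le C D := forall u, C u -> D u.

Lemma thr_le_max_thr S i v : thr S i v <= max_thr S.
Proof.
apply: leq_trans (leq_bigmax_cond _ (isT : predT i)).
exact: (leq_bigmax_cond _ (isT : predT v)).
Qed.

Lemma local_fun_mono S i v C D :
  config_le C D -> local_fun S i v C -> local_fun S i v D.
Proof.
move=> leCD fire; apply: leq_trans fire _; apply/subset_leq_card/subsetP => u.
by rewrite !inE => /andP [-> /leCD].
Qed.

Lemma successor_mono S C D v :
  config_le C D -> successor S C v -> successor S D v.
Proof.
by move=> leCD /existsP [i fire]; apply/existsP; exists i; exact: local_fun_mono fire.
Qed.

Lemma num_ones_mem {s : seq V} : uniq s -> num_ones (mem s) = size s.
Proof. by move=> s_uniq; rewrite /num_ones cardsE; apply/card_uniqP. Qed.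

Lemma local_fun_small_support S i v C :
  local_fun S i v C ->
  exists D, [/\ config_le D C, local_fun S i v D & num_ones D = thr S i v].
Proof.
move=> /card_geqP [s [s_uniq size_s s_active]].
have s_sub u : u \in s -> (u \in closed_nbhd S i v) && C u.
  by move=> /s_active; rewrite inE.
exists (mem s); split; last by rewrite num_ones_mem.
- by move=> u /s_sub /andP [].
- rewrite /local_fun -size_s -(card_uniqP s_uniq).
  apply/subset_leq_card/subsetP => u; rewrite !inE => us.
  by rewrite us andbT; have /andP [+ _] := s_sub u us; rewrite inE.
Qed.

Lemma successor_small_support S C v :
  successor S C v ->
  exists D, [/\ config_le D C, successor S D v & num_ones D <= max_thr S].
Proof.
move=> /existsP [i /local_fun_small_support [D [leDC fire onesD]]].
exists D; split => //; first by apply/existsP; exists i.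
by rewrite onesD thr_le_max_thr.
Qed.

Lemma small_witness {S0 S1 C v} :
  successor S0 C v -> ~~ successor S1 C v ->
  exists D, [/\ successor S0 D v, ~~ successor S1 D v & num_ones D <= max_thr S0].
Proof.
move=> /successor_small_support [D [leDC on0 onesD]] off1.
exists D; split => //; apply: contra off1; exact: successor_mono.
Qed.

Lemma not_equivalent_witness S0 S1 :
  ~ equivalent S0 S1 -> exists C, inequivalence_witness S0 S1 C.
Proof.
move=> neq; apply: NNPP => no_witness; apply: neq => C v.
by apply: NNPP => neqCv; apply: no_witness; exists C, v.
Qed.

End ThresholdOrSystems.

Theorem lemma5p2 (V : finType) (S0 S1 : ThrOrMSyDS V) :
  ~ equivalent S0 S1 <->
  exists C : config V, inequivalence_witness S0 S1 C /\ num_ones C <= tau S0 S1.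
Proof.
split=> [/not_equivalent_witness [C [v neq]] | [C [[v neq] _]] eqS]; last first.
  exact: neq (eqS C v).
case on0: (successor S0 C v) neq; case on1: (successor S1 C v) => // _.
- have [D [D0 D1 onesD]] := small_witness on0 (negbT on1).
  exists D; split; first by exists v; rewrite D0 (negbTE D1).
  exact: leq_trans onesD (leq_maxl _ _).
- have [D [D1 D0 onesD]] := small_witness on1 (negbT on0).
  exists D; split; first by exists v; rewrite D1 (negbTE D0).
  exact: leq_trans onesD (leq_maxr _ _).
Qed.
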